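(* Let $(G,u,v,\alpha,\beta)$ be a Guvab, and suppose it is not the case that ($G$ is bipartite, $\alpha=0$, and $\beta=1$). Then $W:=\lim_{k\to\infty}W(\mu_k,\nu_k)$ exists, and furthermore: (a) $W=0$ if one of the following holds: $0<\alpha\le\beta<1$; or $\alpha=\beta=1$ and $u=v$; or $G$ is not bipartite and $0=\alpha\le\beta<1$; or $\alpha=\beta=0$ and there is a walk from $u$ to $v$ with an even number of steps; (b) $W=1$ if $\alpha=\beta=0$ and $W\ne0$; (c) $W=\frac12$ if $0=\alpha<\beta<1$ and $G$ is bipartite.
   Context: A Guvab is a tuple $(G,u,v,\alpha,\beta)$ where $G$ is a finite, connected, simple graph, $u,v\in V(G)$, and $\alpha,\beta\in[0,1]$ with $\alpha\le\beta$. A random walk on $G$ with starting vertex $w$ and laziness $\gamma$ is the Markov chain $R_0=w$ and, for $i\ge1$, $R_i=R_{i-1}$ with probability $\gamma$ and $R_i=t$ with probability $\frac{1-\gamma}{\deg(R_{i-1})}$ for each neighbor $t$ of $R_{i-1}$. $\mu_k$ is the distribution after $k$ steps of the walk from $u$ with laziness $\alpha$, and $\nu_k$ that of the walk from $v$ with laziness $\beta$. $W(\mu,\nu)$ is the Wasserstein ($L^1$ optimal transport) distance with respect to the graph distance: the minimum over transportation plans (nonnegative $T$ on $V(G)\times V(G)$ with marginals $\mu,\nu$) of $\sum d(w_1,w_2)T(w_1,w_2)$. *)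

From HB Require Import structures.
From mathcomp Require Import all_boot all_order all_algebra.
From mathcomp Require Import all_classical all_reals all_analysis.
Set Implicit Arguments. Unset Strict Implicit. Unset Printing Implicit Defensive.
Import Order.TTheory GRing.Theory Num.Theory.
Import numFieldNormedType.Exports.
Local Open Scope ring_scope.
Local Open Scope classical_set_scope.

Section Guvab.
Variables (R : realType) (T : finType) (e : rel T).

Definition simple_graph := symmetric e /\ irreflexive e.
Definition connected_graph := forall x y : T, connect e x y.

Definition bipartite := exists c : T -> bool, forall x y, e x y -> c x != c y.

Fixpoint walkn (n : nat) (x y : T) : bool :=
  match n with
  | 0 => x == y
  | n'.+1 => [exists z, e x z && walkn n' z y]
  end.

(* graph distance: least n with a walk of length n (shortest walks in a
   connected graph have length < #|T|) *)
Definition gdist (x y : T) : nat :=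
  \big[minn/#|T|]_(n < #|T| | walkn n x y) n.

Definition deg (x : T) : nat := #|[set y | e x y]|.

Definition trans (g : R) (x y : T) : R :=
  if x == y then g else if e x y then (1 - g) / (deg x)%:R else 0.

Fixpoint walk_dist (g : R) (w : T) (k : nat) : T -> R :=
  match k with
  | 0 => fun y => if y == w then 1 else 0
  | k'.+1 => fun y => \sum_(x : T) walk_dist g w k' x * trans g x y
  end.

Definition transport_plan (mu nu : T -> R) (P : T -> T -> R) :=
  (forall x y, 0 <= P x y) /\
  (forall x, \sum_(y : T) P x y = mu x) /\
  (forall y, \sum_(x : T) P x y = nu y).

Definition plan_cost (P : T -> T -> R) : R :=
  \sum_(x : T) \sum_(y : T) (gdist x y)%:R * P x y.

Definition wass (mu nu : T -> R) : R :=
  inf [set c | exists P, transport_plan mu nu P /\ c = plan_cost P].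

End Guvab.

From HB Require Import structures.
From mathcomp Require Import all_boot all_order all_algebra.
From mathcomp Require Import all_classical all_reals all_analysis.
From mathcomp Require Import ring lra.
Import Order.TTheory GRing.Theory Num.Theory.
Import numFieldNormedType.Exports.
Set Implicit Arguments. Unset Strict Implicit. Unset Printing Implicit Defensive.
Local Open Scope ring_scope.
Local Open Scope classical_set_scope.

(* For laziness in (0, 1), or laziness 0 on a non-bipartite graph, some power
   of the transition matrix is entrywise positive, so by Doeblin's argument the
   walk converges in total variation to the stationary law
   pi x = deg x / sum_y deg y.  With laziness 0 on a bipartite graph the same
   argument, run on each colour class, shows that at time k the walk is close
   to 2 pi restricted to the class of parity k.  The transport distance is
   Lipschitz in total variation (glue part of a plan to a product plan), so
   W(mu_k, nu_k) converges to the distance between the limit profiles: 0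
   between equal laws, 1 between the two class halves (all mass must cross
   an edge, and the uniform flow along the edges does so), and 1/2 between a
   class half and pi.  With laziness 1 the walk does not move. *)

Section Walks.
Variables (T : finType) (e : rel T).

Lemma walknSr n x y : walkn e n.+1 x y = [exists z, walkn e n x z && e z y].
Proof.
elim: n x => [|n IH] x.
  apply/existsP/existsP => [[z /andP[xz /eqP <-]]|[z /andP[/eqP <- zy]]].
    by exists x; rewrite /= eqxx.
  by exists y; rewrite zy eqxx.
apply/existsP/existsP => [[z /andP[xz zy]]|[z /andP[/existsP[t /andP[xt tz]] zy]]].
  have : walkn e n.+1 z y := zy.
  rewrite IH => /existsP[t /andP[zt ty]].
  by exists t; rewrite ty andbT; apply/existsP; exists z; rewrite xz.
exists t; rewrite xt; change (walkn e n.+1 t y); rewrite IH.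
by apply/existsP; exists z; rewrite zy andbT.
Qed.

Lemma walkn_cat m n x y z :
  walkn e m x y -> walkn e n y z -> walkn e (m + n) x z.
Proof.
elim: m x => [|m IH] x /=; first by move=> /eqP ->.
move=> /existsP[t /andP[xt ty]] yz; apply/existsP; exists t.
by rewrite xt (IH _ ty yz).
Qed.

Lemma walkn_parity (c : T -> bool) : (forall x y, e x y -> c x != c y) ->
  forall n x y, walkn e n x y -> c y = c x (+) odd n.
Proof.
move=> proper_c; elim=> [|n IH] x y /=; first by move=> /eqP ->; rewrite addbF.
move=> /existsP[t /andP[/proper_c xt /IH ->]].
by move: xt; case: (c x); case: (c t); case: (odd n).
Qed.

Lemma connect_walkn x y : connect e x y -> exists n, walkn e n x y.
Proof.
move=> /connectP[p xp ->]; elim: p x xp => [|z p IH] x /=.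
  by move=> _; exists 0%N => /=.
move=> /andP[xz /IH[n zy]]; exists n.+1.
by apply/existsP; exists z; rewrite xz.
Qed.

Hypothesis esym : symmetric e.

Lemma walkn_rev n x y : walkn e n x y -> walkn e n y x.
Proof.
elim: n x y => [|n IH] x y; first by rewrite /= eq_sym.
move=> /existsP[t /andP[xt /IH ty]]; rewrite walknSr.
by apply/existsP; exists t; rewrite ty esym.
Qed.

Hypothesis econn : connected_graph e.
Hypothesis card_gt1 : (1 < #|T|)%N.

Lemma exists_neighbour x : exists y, e x y.
Proof.
have [y yx] : exists y, y != x.
  move/card_gt1P: card_gt1 => [a [b [_ _ ab]]].
  by case: (eqVneq a x) => [ax|]; [exists b; rewrite -ax eq_sym | exists a].
have [[|n] /=] := connect_walkn (econn x y); first by rewrite eq_sym (negbTE yx).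
by move=> /existsP[z /andP[xz _]]; exists z.
Qed.

Lemma deg_gt0 x : (0 < deg e x)%N.
Proof.
by have [y xy] := exists_neighbour x; apply/card_gt0P; exists y; rewrite inE.
Qed.

(* Going back and forth along an edge adds two steps to any walk. *)
Lemma walkn_pad n m x y :
  walkn e n x y -> (n <= m)%N -> ~~ odd (m - n) -> walkn e m x y.
Proof.
move=> xy nm even_gap.
rewrite -(subnKC nm) -[(m - n)%N]odd_double_half (negbTE even_gap) add0n.
elim: (m - n)./2 => [|j IH]; first by rewrite addn0.
have [z yz] := exists_neighbour y.
have /(walkn_cat IH) : walkn e 2 y y.
  by apply/existsP; exists z; rewrite yz; apply/existsP; exists y; rewrite esym yz eqxx.
by rewrite -addnA addn2.
Qed.

Lemma walkn_bounded : exists N, forall x y, exists2 n, (n <= N)%N & walkn e n x y.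
Proof.
have /fin_all_exists[d walk_d] : forall p : T * T, exists n, walkn e n p.1 p.2.
  by case=> x y; exact: connect_walkn.
exists (\max_p d p) => x y; exists (d (x, y)); [exact: leq_bigmax | exact: walk_d (x, y)].
Qed.

Lemma bipartite_of_no_odd_cycle :
  (forall x n, odd n -> ~~ walkn e n x x) -> bipartite e.
Proof.
move=> no_odd_cycle; have /card_gt0P[r _] := ltnW card_gt1.
have /fin_all_exists[d walk_d] : forall x, exists n, walkn e n r x.
  by move=> x; exact: connect_walkn.
exists (fun x => odd (d x)) => x y xy; apply/negP => /eqP same_parity.
have rx_y : walkn e (d x + 1) r y.
  by apply: walkn_cat (walk_d x) _; apply/existsP; exists y; rewrite xy eqxx.
have := no_odd_cycle r (d x + 1 + d y)%N.
rewrite !oddD same_parity addbC addbA addbb (walkn_cat rx_y (walkn_rev (walk_d y))).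
by move=> /(_ isT).
Qed.

Lemma bipartite_walkn_uniform (c : T -> bool) :
  (forall x y, e x y -> c x != c y) ->
  exists N, [/\ (0 < N)%N, ~~ odd N & forall x y, c x = c y -> walkn e N x y].
Proof.
move=> proper_c; have [N bounded] := walkn_bounded.
exists N.+1.*2; split; rewrite ?odd_double // => x y cxy.
have [n nN xy] := bounded x y.
have nM : (n <= N.+1.*2)%N.
  by rewrite -addnn (leq_trans nN) // (leq_trans (leqnSn N)) ?leq_addr.
have even_n : ~~ odd n.
  by have := walkn_parity proper_c xy; rewrite cxy; case: (c y); case: (odd n).
by apply: (walkn_pad xy nM); rewrite oddB ?odd_double.
Qed.

Lemma nonbipartite_walkn_uniform :
  ~ bipartite e -> exists N, (0 < N)%N /\ forall x y, walkn e N x y.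
Proof.
move=> nbip.
have [x0 [L [oddL cycle]]] : exists x L, odd L /\ walkn e L x x.
  apply: contra_notP nbip => no_cycle; apply: bipartite_of_no_odd_cycle => x n odd_n.
  by apply/negP => cycle; apply: no_cycle; exists x, n.
have [N bounded] := walkn_bounded.
exists (N.*2 + L)%N; split; first by rewrite addn_gt0 (odd_gt0 oddL) orbT.
move=> x y; have [a aN xx0] := bounded x x0; have [b bN x0y] := bounded x0 y.
have ab_le : (a + b <= N.*2)%N by rewrite -addnn leq_add.
have gapE : (N.*2 + L - (a + b) = N.*2 - (a + b) + L)%N by rewrite addnBAC.
case: (boolP (odd (a + b))) => odd_ab.
  apply: walkn_pad (walkn_cat xx0 x0y) _ _; first by rewrite (leq_trans ab_le) ?leq_addr.
  by rewrite gapE oddD oddB ?odd_double ?odd_ab ?oddL.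
apply: walkn_pad (walkn_cat (walkn_cat xx0 cycle) x0y) _ _.
  by rewrite addnAC leq_add2r.
by rewrite addnAC subnDr oddB ?odd_double.
Qed.

End Walks.

Section Vectors.
Context {R : realType} {T : finType}.
Implicit Types s : T -> R.

Definition l1 s : R := \sum_x `|s x|.
Definition is_distr s := (forall x, 0 <= s x) /\ \sum_x s x = 1.
Definition dirac (w : T) : T -> R := fun y => if y == w then 1 else 0.

Lemma l1_ge0 s : 0 <= l1 s.
Proof. exact: sumr_ge0. Qed.

Lemma l1_subrr s : l1 (fun x => s x - s x) = 0.
Proof. by rewrite /l1 big1 // => x _; rewrite subrr normr0. Qed.

Lemma dirac_distr w : is_distr (dirac w).
Proof.
split=> [x|]; first by rewrite /dirac; case: eqP.
by rewrite /dirac -big_mkcond big_pred1_eq.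
Qed.

Lemma exists_pos_lbound (I : finType) (f : I -> R) : (forall i, 0 < f i) ->
  exists2 eps, 0 < eps <= 1 & forall i, eps <= f i.
Proof.
move=> f_gt0; exists (\big[Order.min/1]_i f i); last by move=> i; exact: bigmin_le.
rewrite bigmin_le_id andbT.
by apply: (big_ind (fun z => 0 < z)) => // a b a_gt0 b_gt0; rewrite lt_min a_gt0.
Qed.

End Vectors.

Section Doeblin.
Variables (R : realType) (T : finType) (I : eqType) (c : T -> I).
Variables (K : T -> T -> R) (eps : R).
Hypothesis K_sum1 : forall x, \sum_y K x y = 1.
Hypothesis K_cross : forall x y, c x != c y -> K x y = 0.
Implicit Types s : T -> R.

Definition kmul s : T -> R := fun y => \sum_x s x * K x y.
Definition class_balanced s := forall i, \sum_(x | c x == i) s x = 0.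

Lemma kmul_class s y : kmul s y = \sum_(x | c x == c y) s x * K x y.
Proof.
rewrite /kmul [RHS]big_mkcond; apply: eq_bigr => x _.
by case: eqP => // /eqP xy; rewrite K_cross ?mulr0.
Qed.

Lemma row_class_sum x : \sum_(y | c y == c x) K x y = 1.
Proof.
rewrite -(K_sum1 x) big_mkcond; apply: eq_bigr => y _.
by case: eqP => // /eqP yx; rewrite K_cross // eq_sym.
Qed.

Lemma kmul_class_sum s i : \sum_(y | c y == i) kmul s y = \sum_(x | c x == i) s x.
Proof.
transitivity (\sum_(y | c y == i) \sum_(x | c x == i) s x * K x y).
  by apply: eq_bigr => y /eqP yi; rewrite kmul_class yi.
rewrite exchange_big /=; apply: eq_bigr => x /eqP xi.
by rewrite -mulr_sumr -xi row_class_sum mulr1.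
Qed.

Lemma kmul_balanced s : class_balanced s -> class_balanced (kmul s).
Proof. by move=> bal i; rewrite kmul_class_sum. Qed.

Hypothesis eps_minor : forall x y, c x = c y -> eps <= K x y.
Hypothesis eps_ge0 : 0 <= eps.

(* On balanced vectors the part eps of every row can be subtracted for free. *)
Lemma kmul_balancedE s y : class_balanced s ->
  kmul s y = \sum_(x | c x == c y) s x * (K x y - eps).
Proof.
move=> bal; rewrite kmul_class.
under [RHS]eq_bigr => x _ do rewrite mulrBr.
by rewrite sumrB -mulr_suml bal mul0r subr0.
Qed.

Lemma l1_kmul_balanced s : class_balanced s -> l1 (kmul s) <= (1 - eps) * l1 s.
Proof.
move=> bal; rewrite /l1 mulr_sumr.
apply: (le_trans (y := \sum_y \sum_(x | c x == c y) `|s x| * (K x y - eps))).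
  apply: ler_sum => y _; rewrite kmul_balancedE //.
  apply: (le_trans (ler_norm_sum _ _ _)); apply: ler_sum => x /eqP xy.
  by rewrite normrM [`|K x y - eps|]ger0_norm // subr_ge0 eps_minor.
rewrite (exchange_big_dep xpredT) //=; apply: ler_sum => x _.
rewrite -mulr_sumr mulrC ler_wpM2r // sumrB.
rewrite (eq_bigl (fun y => c y == c x)) => [|y]; last by rewrite eq_sym.
by rewrite row_class_sum lerD2l lerN2 (bigD1 x) //= lerDl sumr_ge0.
Qed.

End Doeblin.

Section Gluing.
Variables (R : realType) (T : finType).
Implicit Types (mu nu : T -> R) (C P Q : T -> T -> R).

Definition cost C P : R := \sum_x \sum_y C x y * P x y.

Lemma transport_plan_tr mu nu P :
  transport_plan mu nu P -> transport_plan nu mu (fun x y => P y x).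
Proof. by case=> P_ge0 [rows cols]; split. Qed.

Lemma cost_tr C P : cost C P = cost (fun x y => C y x) (fun x y => P y x).
Proof. exact: exchange_big. Qed.

Lemma transport_plan_mass mu nu P :
  transport_plan mu nu P -> \sum_y nu y = \sum_x mu x.
Proof.
case=> _ [rows cols]; under eq_bigr => y _ do rewrite -cols.
by rewrite exchange_big; apply: eq_bigr => x _; rewrite rows.
Qed.

Section Glue.
Variables (C : T -> T -> R) (D : R) (mu mu' nu : T -> R) (Q : T -> T -> R).
Hypothesis C_bound : forall x y, 0 <= C x y <= D.
Hypotheses (mu_distr : is_distr mu) (mu'_distr : is_distr mu').
Hypothesis Q_plan : transport_plan mu' nu Q.

(* Keep the fraction [r x] of row [x] of [Q] that [mu] can still afford
   ([r x = 0] when [mu' x = 0], as [_ / 0 = 0]), and send the excess [a] of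
   [mu] to the resulting deficit [b] of [nu] by a product plan: only the
   excess pays, at most [D] per unit. *)
Let m x := Order.min (mu x) (mu' x).
Let r x := m x / mu' x.
Let a x := mu x - m x.
Let b y := nu y - \sum_x r x * Q x y.
Let S := \sum_x a x.
Let glue x y := r x * Q x y + a x * b y / S.

Let m_ge0 x : 0 <= m x.
Proof. by rewrite le_min mu_distr.1 mu'_distr.1. Qed.

Let r_ge0 x : 0 <= r x.
Proof. by rewrite divr_ge0 ?m_ge0 ?mu'_distr.1. Qed.

Let r_le1 x : r x <= 1.
Proof.
rewrite /r; have [->|mu'_neq0] := eqVneq (mu' x) 0; first by rewrite invr0 mulr0 ler01.
by rewrite ler_pdivrMr ?mul1r ?ge_min ?lexx ?orbT // lt0r mu'_neq0 mu'_distr.1.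
Qed.

Let row_kept x : \sum_y r x * Q x y = m x.
Proof.
rewrite -mulr_sumr Q_plan.2.1 /r.
have [mu'0|mu'_neq0] := eqVneq (mu' x) 0; last by rewrite divfK.
by rewrite mu'0 mulr0 /m mu'0; apply/esym/min_idPr; exact: mu_distr.1.
Qed.

Let a_ge0 x : 0 <= a x.
Proof. by rewrite subr_ge0 ge_min lexx. Qed.

Let a_le x : a x <= `|mu x - mu' x|.
Proof.
rewrite /a /m; case: (leP (mu x) (mu' x)) => _; last exact: ler_norm.
by rewrite subrr.
Qed.

Let b_ge0 y : 0 <= b y.
Proof.
rewrite subr_ge0 -Q_plan.2.2; apply: ler_sum => x _.
by rewrite ler_piMl ?Q_plan.1 ?r_le1.
Qed.

Let sum_b : \sum_y b y = S.
Proof.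
rewrite sumrB (transport_plan_mass Q_plan) exchange_big /=.
under [X in _ - X]eq_bigr => x _ do rewrite row_kept.
by rewrite /S sumrB mu_distr.2 mu'_distr.2.
Qed.

Let S0_a0 x : S = 0 -> a x = 0.
Proof. by move=> S0; apply: (psumr_eq0P _ S0) => // z _. Qed.

Let S0_b0 y : S = 0 -> b y = 0.
Proof. by rewrite -sum_b => S0; apply: (psumr_eq0P _ S0) => // z _. Qed.

Let glue_plan : transport_plan mu nu glue.
Proof.
have S_ge0 : 0 <= S by exact: sumr_ge0.
split=> [x y|].
  apply: addr_ge0; first exact: mulr_ge0 (r_ge0 x) (Q_plan.1 x y).
  exact: divr_ge0 (mulr_ge0 (a_ge0 x) (b_ge0 y)) S_ge0.
split=> [x|y]; rewrite big_split /=.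
  rewrite row_kept -mulr_suml -mulr_sumr sum_b.
  have [S0|S_neq0] := eqVneq S 0; last by rewrite mulfK // /a addrC subrK.
  by move: (S0_a0 x S0); rewrite S0 mulr0 mul0r addr0 => /subr0_eq.
rewrite -!mulr_suml -/S.
have [S0|S_neq0] := eqVneq S 0; last by rewrite mulrAC divff // mul1r /b addrC subrK.
by move: (S0_b0 y S0); rewrite S0 mul0r mul0r addr0 => /subr0_eq.
Qed.

Let glue_cost : cost C glue <= cost C Q + D * l1 (fun x => mu x - mu' x).
Proof.
rewrite /cost; under eq_bigr => x _ do under eq_bigr => y _ do rewrite mulrDr.
rewrite (eq_bigr _ (fun x _ => big_split _ _ _ _ _)) big_split /=; apply: lerD.
  apply: ler_sum => x _; apply: ler_sum => y _.
  by rewrite ler_wpM2l ?(andP (C_bound x y)).1 // ler_piMl ?Q_plan.1 ?r_le1.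
apply: (le_trans (y := \sum_x \sum_y D * (a x * b y / S))).
  do 2!(apply: ler_sum => ? _); apply: ler_wpM2r.
    by rewrite divr_ge0 ?mulr_ge0 ?sumr_ge0.
  exact: (andP (C_bound _ _)).2.
rewrite /l1 mulr_sumr; apply: ler_sum => x _.
have D_ge0 : 0 <= D by case/andP: (C_bound x x); apply: le_trans.
rewrite -mulr_sumr -mulr_suml -mulr_sumr sum_b ler_wpM2l //.
have [S0|S_neq0] := eqVneq S 0; first by rewrite S0 mulr0 invr0 mulr0 normr_ge0.
by rewrite mulfK ?a_le.
Qed.

Lemma transport_plan_glue :
  exists P, transport_plan mu nu P /\ cost C P <= cost C Q + D * l1 (fun x => mu x - mu' x).
Proof. by exists glue; split; [exact: glue_plan | exact: glue_cost]. Qed.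

End Glue.
End Gluing.

Section Wasserstein.
Variables (R : realType) (T : finType) (e : rel T).
Implicit Types (mu nu : T -> R) (P : T -> T -> R).

Let dist x y : R := (gdist e x y)%:R.

Lemma plan_costE P : plan_cost e P = cost dist P.
Proof. by []. Qed.

Lemma gdist_le_card x y : (gdist e x y <= #|T|)%N.
Proof.
rewrite /gdist; elim/big_ind: _ => // [m n|i _]; last exact: ltnW.
by rewrite geq_min => ->.
Qed.

Lemma gdist_le n x y : (n < #|T|)%N -> walkn e n x y -> (gdist e x y <= n)%N.
Proof.
move=> n_lt xy.
exact: (bigmin_le_cond #|T| (fun i : 'I_#|T| => nat_of_ord i) (j := Ordinal n_lt) xy).
Qed.

Lemma gdist_xx x : gdist e x x = 0%N.
Proof.
have card_gt0 : (0 < #|T|)%N by apply/card_gt0P; exists x.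
by apply/eqP; rewrite -leqn0 (gdist_le card_gt0) //= eqxx.
Qed.

Lemma gdist_gt0 x y : x != y -> (0 < gdist e x y)%N.
Proof.
move=> xy; have card_gt0 : (0 < #|T|)%N by apply/card_gt0P; exists x.
rewrite /gdist; elim/big_ind: _ => // [m n m_gt0 n_gt0|[[|n] n_lt] //=].
  by rewrite leq_min m_gt0.
by rewrite (negbTE xy).
Qed.

Lemma wass_le_cost mu nu P : transport_plan mu nu P -> wass e mu nu <= plan_cost e P.
Proof.
move=> P_plan; apply: ge_inf; last by exists P.
exists 0 => _ [Q [[Q_ge0 _] ->]].
by do 2!(apply: sumr_ge0 => ? _); rewrite mulr_ge0 ?ler0n.
Qed.

Lemma prod_transport_plan mu nu : is_distr mu -> is_distr nu ->
  transport_plan mu nu (fun x y => mu x * nu y).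
Proof.
move=> [mu_ge0 mu_sum1] [nu_ge0 nu_sum1]; split=> [x y|]; first by rewrite mulr_ge0.
by split=> [x|y]; rewrite -?mulr_sumr -?mulr_suml ?nu_sum1 ?mu_sum1 ?mulr1 ?mul1r.
Qed.

Lemma wass_ge mu nu L : is_distr mu -> is_distr nu ->
  (forall P, transport_plan mu nu P -> L <= plan_cost e P) -> L <= wass e mu nu.
Proof.
move=> mu_distr nu_distr lb; apply: lb_le_inf; last by move=> _ [P [P_plan ->]]; exact: lb.
by exists (plan_cost e (fun x y => mu x * nu y)); exists (fun x y => mu x * nu y);
   split=> //; exact: prod_transport_plan.
Qed.

Lemma wass_ge0 mu nu : is_distr mu -> is_distr nu -> 0 <= wass e mu nu.
Proof.
move=> mu_distr nu_distr; apply: wass_ge => // P [P_ge0 _].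
by do 2!(apply: sumr_ge0 => ? _); rewrite mulr_ge0 ?ler0n.
Qed.

Lemma wass_xx mu : is_distr mu -> wass e mu mu = 0.
Proof.
move=> mu_distr; apply/eqP; rewrite eq_le wass_ge0 // andbT.
pose P x y := if x == y then mu x else 0.
have P_plan : transport_plan mu mu P.
  split=> [x y|]; first by rewrite /P; case: eqP => // _; exact: mu_distr.1.
  split=> [x|y]; rewrite /P.
    by under eq_bigr => y _ do rewrite (eq_sym x); rewrite -big_mkcond big_pred1_eq.
  by rewrite -big_mkcond big_pred1_eq.
apply: le_trans (wass_le_cost P_plan) _; rewrite /plan_cost big1 // => x _.
by rewrite big1 // => y _; rewrite /P; case: eqP => [->|]; rewrite ?gdist_xx ?mul0r ?mulr0.
Qed.

Lemma wass_lipschitz mu mu' nu nu' :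
  is_distr mu -> is_distr mu' -> is_distr nu -> is_distr nu' ->
  `|wass e mu nu - wass e mu' nu'| <=
    #|T|%:R * (l1 (fun x => mu x - mu' x) + l1 (fun y => nu y - nu' y)).
Proof.
have dist_bound x y : 0 <= dist x y <= #|T|%:R by rewrite ler0n ler_nat gdist_le_card.
have dist_tr_bound x y : 0 <= dist y x <= #|T|%:R by exact: dist_bound.
suff one_side mu1 mu2 nu1 nu2 :
    is_distr mu1 -> is_distr mu2 -> is_distr nu1 -> is_distr nu2 ->
    wass e mu1 nu1 <= wass e mu2 nu2 +
      #|T|%:R * (l1 (fun x => mu1 x - mu2 x) + l1 (fun y => nu1 y - nu2 y)).
  move=> mu_d mu'_d nu_d nu'_d; rewrite ler_norml.
  have l1_sym (s t : T -> R) : l1 (fun x => t x - s x) = l1 (fun x => s x - t x).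
    by apply: eq_bigr => x _; rewrite distrC.
  have := one_side _ _ _ _ mu'_d mu_d nu'_d nu_d.
  rewrite (l1_sym mu) (l1_sym nu).
  have := one_side _ _ _ _ mu_d mu'_d nu_d nu'_d.
  move=> h1 h2; apply/andP; split; lra.
move=> mu1_d mu2_d nu1_d nu2_d; rewrite -lerBlDr; apply: wass_ge => // Q Q_plan.
have [Q' [Q'_plan Q'_cost]] :=
  transport_plan_glue dist_tr_bound nu1_d nu2_d (transport_plan_tr Q_plan).
have [P [P_plan P_cost]] :=
  transport_plan_glue dist_bound mu1_d mu2_d (transport_plan_tr Q'_plan).
have := wass_le_cost P_plan; rewrite !plan_costE (cost_tr dist Q) in P_cost *.
rewrite (cost_tr _ Q') in Q'_cost; lra.
Qed.

Lemma wass_cvg_l1 (mu nu a b : nat -> T -> R) (W : R) :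
  (forall k, is_distr (mu k)) -> (forall k, is_distr (nu k)) ->
  (forall k, is_distr (a k)) -> (forall k, is_distr (b k)) ->
  (fun k => l1 (fun x => mu k x - a k x)) @ \oo --> 0 ->
  (fun k => l1 (fun y => nu k y - b k y)) @ \oo --> 0 ->
  (forall k, wass e (a k) (b k) = W) ->
  (fun k => wass e (mu k) (nu k)) @ \oo --> W.
Proof.
move=> mu_d nu_d a_d b_d mu_a nu_b wass_ab.
pose err k := #|T|%:R * (l1 (fun x => mu k x - a k x) + l1 (fun y => nu k y - b k y)).
have err0 : err @ \oo --> 0.
  by rewrite -(mulr0 #|T|%:R) -(addr0 0); apply: cvgM; [exact: cvg_cst | exact: cvgD].
apply: (squeeze_cvgr (f := fun k => W - err k) (h := fun k => W + err k)).
- apply: nearW => k; rewrite -ler_distl -(wass_ab k).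
  exact: wass_lipschitz.
- by rewrite -[X in _ --> X]subr0; exact: cvgB (cvg_cst W) err0.
- by rewrite -[X in _ --> X]addr0; exact: cvgD (cvg_cst W) err0.
Qed.

End Wasserstein.

Section RandomWalk.
Variables (R : realType) (T : finType) (e : rel T).
Implicit Types (g : R) (s t : T -> R).

Definition step g s : T -> R := fun y => \sum_x s x * trans e g x y.

Lemma walk_distE g w k : walk_dist e g w k = iter k (step g) (dirac w).
Proof. by elim: k => //= k ->. Qed.

Lemma sum_neighbours x (a : R) : \sum_y (if e x y then a else 0) = a * (deg e x)%:R.
Proof.
rewrite /deg -sum1_card natr_sum mulr_sumr [RHS]big_mkcond /=.
by apply: eq_bigr => y _; rewrite /in_mem /= /in_set asboolb mulr1.
Qed.

Lemma trans_ge0 g x y : 0 <= g <= 1 -> 0 <= trans e g x y.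
Proof.
move=> /andP[g0 g1]; rewrite /trans.
by case: (x == y) => //; case: (e x y) => //; rewrite divr_ge0 ?subr_ge0.
Qed.

Lemma iter_stepB g k s t :
  iter k (step g) (fun y => s y - t y) =
  (fun y => iter k (step g) s y - iter k (step g) t y).
Proof.
elim: k => //= k ->; apply: boolp.funext => y.
by rewrite /step -sumrB; apply: eq_bigr => x _; rewrite mulrBl.
Qed.

Lemma iter_step_kernel g k s y :
  iter k (step g) s y = \sum_x s x * walk_dist e g x k y.
Proof.
elim: k y => [|k IH] y /=.
  by rewrite (bigD1 y) //= eqxx mulr1 big1 ?addr0 // => x xy; rewrite eq_sym (negbTE xy) mulr0.
transitivity (\sum_z \sum_x s x * walk_dist e g x k z * trans e g z y).
  by apply: eq_bigr => z _; rewrite IH mulr_suml.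
rewrite exchange_big /=; apply: eq_bigr => x _.
by rewrite mulr_sumr; apply: eq_bigr => z _; rewrite mulrA.
Qed.

Lemma walk_dist1 w k : walk_dist e (1 : R) w k = dirac w.
Proof.
elim: k => //= k ->; apply: boolp.funext => y.
rewrite (bigD1 y) //= /trans eqxx mulr1 big1 ?addr0 // => x /negbTE xy.
by rewrite xy /dirac subrr mul0r if_same; case: (x == w); rewrite ?mulr0 ?mul0r.
Qed.

Lemma wass_walk_dist1 u v k :
  wass e (walk_dist e (1 : R) u k) (walk_dist e 1 v k) = wass e (dirac u) (dirac v).
Proof. by rewrite !walk_dist1. Qed.

Hypothesis esym : symmetric e.
Hypothesis eirr : irreflexive e.
Hypothesis econn : connected_graph e.
Hypothesis card_gt1 : (1 < #|T|)%N.

Lemma deg_neq0 x : (deg e x)%:R != 0 :> R.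
Proof. by rewrite pnatr_eq0 -lt0n deg_gt0. Qed.

Lemma transE g x y : trans e g x y =
  (if x == y then g else 0) + (if e x y then (1 - g) / (deg e x)%:R else 0).
Proof.
rewrite /trans; case: eqP => [<-|]; last by rewrite add0r.
by rewrite eirr addr0.
Qed.

Lemma trans_sum1 g x : \sum_y trans e g x y = 1.
Proof.
under eq_bigr => y _ do rewrite transE.
rewrite big_split /= sum_neighbours divfK ?deg_neq0 //.
by rewrite -big_mkcond /= (big_pred1 x) => [|y]; rewrite 1?eq_sym // addrC subrK.
Qed.

Lemma step_distr g s : 0 <= g <= 1 -> is_distr s -> is_distr (step g s).
Proof.
move=> g01 [s_ge0 s_sum1]; split=> [y|].
  by apply: sumr_ge0 => x _; rewrite mulr_ge0 ?trans_ge0.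
rewrite /step exchange_big /= -s_sum1; apply: eq_bigr => x _.
by rewrite -mulr_sumr trans_sum1 mulr1.
Qed.

Lemma walk_dist_distr g w k : 0 <= g <= 1 -> is_distr (walk_dist e g w k).
Proof.
move=> g01; elim: k => [|k IH]; first exact: dirac_distr.
exact: step_distr.
Qed.

Lemma l1_iter_step g k s : 0 <= g <= 1 -> l1 (iter k (step g) s) <= l1 s.
Proof.
move=> g01; elim: k => //= k; apply: le_trans; rewrite /l1 /step.
apply: (le_trans (y := \sum_y \sum_x `|iter k (step g) s x| * trans e g x y)).
  apply: ler_sum => y _; apply: (le_trans (ler_norm_sum _ _ _)).
  by apply: ler_sum => x _; rewrite normrM (ger0_norm (trans_ge0 _ _ g01)).
rewrite exchange_big /=; apply: ler_sum => x _.
by rewrite -mulr_sumr trans_sum1 mulr1.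
Qed.

Lemma walk_dist_gt0 g n x y :
  0 <= g < 1 -> walkn e n x y -> 0 < walk_dist e g x n y.
Proof.
move=> /andP[g0 g1]; have g01 : 0 <= g <= 1 by rewrite g0 ltW.
elim: n y => [|n IH] y; first by move=> /= /eqP ->; rewrite eqxx.
rewrite walknSr => /existsP[z /andP[/IH xz zy]].
rewrite /= (bigD1 z) //= ltr_pwDl ?sumr_ge0 // => [|t _]; last first.
  by rewrite mulr_ge0 ?trans_ge0 ?(walk_dist_distr x n g01).1.
rewrite mulr_gt0 // /trans; case: eqP => [zy'|_]; first by rewrite zy' eirr in zy.
by rewrite zy divr_gt0 ?subr_gt0 // ltr0n deg_gt0.
Qed.

(* A lazy walk can wait at its endpoint. *)
Lemma walk_dist_lazy_gt0 g n m x y :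
  0 < g < 1 -> walkn e n x y -> (n <= m)%N -> 0 < walk_dist e g x m y.
Proof.
move=> /andP[g0 g1] xy /subnKC <-; have g01 : 0 <= g <= 1 by rewrite !ltW.
elim: (m - n)%N => [|j IH]; first by rewrite addn0 walk_dist_gt0 ?(ltW g0).
rewrite addnS /= (bigD1 y) //= ltr_pwDl ?sumr_ge0 // => [|t _]; last first.
  by rewrite mulr_ge0 ?trans_ge0 ?(walk_dist_distr x _ g01).1.
by rewrite /trans eqxx mulr_gt0.
Qed.

Definition vol : R := \sum_x (deg e x)%:R.
Definition stationary : T -> R := fun x => (deg e x)%:R / vol.

Lemma vol_gt0 : 0 < vol.
Proof.
have /card_gt0P[r _] := ltnW card_gt1.
by rewrite /vol (bigD1 r) //= ltr_pwDl ?ltr0n ?deg_gt0 ?sumr_ge0.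
Qed.

Let vol_neq0 : vol != 0 := lt0r_neq0 vol_gt0.

Lemma stationary_distr : is_distr stationary.
Proof.
split=> [x|]; first by rewrite divr_ge0 ?ler0n ?ltW ?vol_gt0.
by rewrite -mulr_suml divff.
Qed.

Lemma step_stationary g : step g stationary = stationary.
Proof.
apply: boolp.funext => y; rewrite /step.
under eq_bigr => x _ do rewrite transE mulrDr.
rewrite big_split /=.
have -> : \sum_x stationary x * (if x == y then g else 0) = stationary y * g.
  by rewrite (bigD1 y) //= eqxx big1 ?addr0 // => x /negbTE ->; rewrite mulr0.
have -> : \sum_x stationary x * (if e x y then (1 - g) / (deg e x)%:R else 0) =
          \sum_x (if e y x then (1 - g) / vol else 0).
  apply: eq_bigr => x _; rewrite esym; case: (e y x); last by rewrite mulr0.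
  by rewrite /stationary; field; rewrite vol_neq0 deg_neq0.
by rewrite sum_neighbours /stationary; field.
Qed.

Lemma iter_step_stationary g k : iter k (step g) stationary = stationary.
Proof. by elim: k => //= k ->; rewrite step_stationary. Qed.

(* Every N steps the l1 norm shrinks by the factor 1 - eps (Doeblin), and in
   between it does not grow. *)
Lemma l1_iter_step_cvg0 (I : eqType) (c : T -> I) g N eps s :
  0 <= g <= 1 -> (0 < N)%N -> 0 < eps <= 1 ->
  (forall x y, c x = c y -> eps <= walk_dist e g x N y) ->
  (forall x y, c x != c y -> walk_dist e g x N y = 0) ->
  class_balanced c s ->
  (fun k => l1 (iter k (step g) s)) @ \oo --> 0.
Proof.
move=> g01 N_gt0 /andP[eps_gt0 eps_le1] minor cross bal.
have K_sum1 x : \sum_y walk_dist e g x N y = 1 by rewrite (walk_dist_distr x N g01).2.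
have iterN t : iter N (step g) t = kmul (fun x => walk_dist e g x N) t.
  by apply: boolp.funext => y; rewrite iter_step_kernel.
have decay j : l1 (iter (j * N) (step g) s) <= (1 - eps) ^+ j * l1 s /\
               class_balanced c (iter (j * N) (step g) s).
  elim: j => [|j [decay_j bal_j]]; first by rewrite mul0n expr0 mul1r.
  rewrite mulSn iterD iterN; split; last exact: kmul_balanced.
  apply: le_trans (l1_kmul_balanced K_sum1 cross minor (ltW eps_gt0) bal_j) _.
  by rewrite exprS -mulrA ler_wpM2l ?subr_ge0.
have geom_cvg : (fun j => (1 - eps) ^+ j * l1 s) @ \oo --> 0.
  rewrite -(mul0r (l1 s)); apply: cvgM; last exact: cvg_cst.
  by apply: cvg_expr; rewrite ger0_norm ?subr_ge0 // ltrBlDr ltrDl.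
apply/cvgrPdist_lt => d d_gt0.
have [J _ geom_J] := (cvgrPdist_lt _ _).1 geom_cvg d d_gt0.
have := geom_J J (leqnn J).
rewrite /= sub0r normrN ger0_norm ?mulr_ge0 ?exprn_ge0 ?l1_ge0 ?subr_ge0 // => lt_d.
exists (J * N)%N => // k /= JN_le_k; rewrite sub0r normrN ger0_norm ?l1_ge0 //.
rewrite -(subnK JN_le_k) iterD.
exact: le_lt_trans (l1_iter_step _ _ g01) (le_lt_trans (decay J).1 lt_d).
Qed.

Lemma walk_dist_uniform_gt0 g : 0 <= g < 1 -> 0 < g \/ ~ bipartite e ->
  exists N, (0 < N)%N /\ forall x y, 0 < walk_dist e g x N y.
Proof.
move=> g01 [g_gt0|nbip].
  have [N bounded] := walkn_bounded econn.
  exists N.+1; split=> // x y; have [n nN xy] := bounded x y.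
  by apply: walk_dist_lazy_gt0 xy (leqW nN); rewrite g_gt0 (andP g01).2.
have [N [N_gt0 walks]] := nonbipartite_walkn_uniform esym econn card_gt1 nbip.
by exists N; split=> // x y; exact: walk_dist_gt0.
Qed.

Lemma walk_dist_cvg_stationary g w : 0 <= g < 1 -> 0 < g \/ ~ bipartite e ->
  (fun k => l1 (fun y => walk_dist e g w k y - stationary y)) @ \oo --> 0.
Proof.
move=> g01 aperiodic; have g01' : 0 <= g <= 1 by case/andP: g01 => -> /ltW.
have [N [N_gt0 pos]] := walk_dist_uniform_gt0 g01 aperiodic.
have [eps eps01 minor] := exists_pos_lbound (fun p : T * T => pos p.1 p.2).
have -> : (fun k => l1 (fun y => walk_dist e g w k y - stationary y)) =
          (fun k => l1 (iter k (step g) (fun y => dirac w y - stationary y))).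
  by apply: boolp.funext => k; rewrite iter_stepB iter_step_stationary walk_distE.
apply: (l1_iter_step_cvg0 (c := fun=> tt) g01' N_gt0 eps01) => // [x y _|[]].
  exact: minor (x, y).
by rewrite sumrB (dirac_distr w).2 stationary_distr.2 subrr.
Qed.

Section Bipartite.
Variable c : T -> bool.
Hypothesis proper_c : forall x y, e x y -> c x != c y.

Definition stationary_on (b : bool) : T -> R :=
  fun x => if c x == b then stationary x else 0.
Definition class_half (b : bool) : T -> R := fun x => 2 * stationary_on b x.
Definition edge_flow (b : bool) : T -> T -> R :=
  fun x y => if (c x == b) && e x y then vol^-1 else 0.

Lemma class_edge x y b : e x y -> (c x == b) = (c y == ~~ b).
Proof. by move=> /proper_c; case: (c x); case: (c y); case: b. Qed.

Lemma stationary_onNE b x : stationary_on b x + stationary_on (~~ b) x = stationary x.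
Proof. by rewrite /stationary_on; case: (c x); case: b; rewrite /= ?addr0 ?add0r. Qed.

Lemma edge_flow_ge0 b x y : 0 <= edge_flow b x y.
Proof. by rewrite /edge_flow; case: ifP => // _; rewrite invr_ge0 ltW ?vol_gt0. Qed.

Lemma edge_flow_row b x : \sum_y edge_flow b x y = stationary_on b x.
Proof.
rewrite /edge_flow /stationary_on /stationary; case: (c x == b) => /=.
  by rewrite sum_neighbours mulrC.
by rewrite big1.
Qed.

Lemma edge_flow_col b y : \sum_x edge_flow b x y = stationary_on (~~ b) y.
Proof.
transitivity (\sum_x (if e y x then (if c y == ~~ b then vol^-1 else 0) else 0)).
  apply: eq_bigr => x _; rewrite /edge_flow (esym y x).
  by case exy: (e x y); rewrite ?andbF ?(class_edge b exy) ?andbT.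
rewrite sum_neighbours /stationary_on /stationary.
by case: ifP => _; rewrite ?mul0r // mulrC.
Qed.

(* The flow carries the mass of class b onto the mass of the other class. *)
Lemma sum_stationary_on b : \sum_x stationary_on b x = 1 / 2.
Proof.
have flow_mass : \sum_x stationary_on b x = \sum_x stationary_on (~~ b) x.
  under eq_bigr => x _ do rewrite -edge_flow_row.
  by rewrite exchange_big; apply: eq_bigr => y _; rewrite edge_flow_col.
have : \sum_x stationary_on b x + \sum_x stationary_on (~~ b) x = 1.
  by rewrite -big_split -stationary_distr.2; apply: eq_bigr => x _; exact: stationary_onNE.
rewrite -flow_mass; lra.
Qed.

Lemma class_half_distr b : is_distr (class_half b).
Proof.
split=> [x|]; last by rewrite -mulr_sumr sum_stationary_on; field.
rewrite /class_half /stationary_on; case: ifP => _; rewrite ?mulr0 //.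
by rewrite mulr_ge0 ?(stationary_distr.1 x).
Qed.

Lemma stationary_on_trans0 b x y : stationary_on b x * trans e 0 x y = edge_flow b x y.
Proof.
rewrite transE subr0 if_same add0r /stationary_on /edge_flow /stationary.
case: (c x == b); last by rewrite mul0r.
by case: (e x y); rewrite ?mulr0 //=; field; rewrite vol_neq0 deg_neq0.
Qed.

Lemma step0_class_half b : step 0 (class_half b) = class_half (~~ b).
Proof.
apply: boolp.funext => y; rewrite /step /class_half -edge_flow_col mulr_sumr.
by apply: eq_bigr => x _; rewrite -mulrA stationary_on_trans0.
Qed.

Lemma iter_step0_class_half b k :
  iter k (step 0) (class_half b) = class_half (b (+) odd k).
Proof.
elim: k => [|k IH] /=; first by rewrite addbF.
by rewrite IH step0_class_half addbN.
Qed.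

Lemma walk_dist0_other_class w k y :
  c y != c w (+) odd k -> walk_dist e 0 w k y = 0 :> R.
Proof.
elim: k y => [|k IH] y /=.
  by rewrite addbF; case: (eqVneq y w) => [->|]; rewrite ?eqxx.
move=> y_other; apply: big1 => x _.
case: (eqVneq (c x) (c w (+) odd k)) => x_class; last by rewrite IH // mul0r.
rewrite /trans; case: eqP => _; first by rewrite mulr0.
case exy: (e x y); last by rewrite mulr0.
by move: (proper_c exy) y_other; rewrite x_class; case: (c y); case: (c w); case: (odd k).
Qed.

Lemma class_sum_supported (s : T -> R) a b : (forall x, c x != a -> s x = 0) ->
  \sum_(x | c x == b) s x = if b == a then \sum_x s x else 0.
Proof.
move=> supp; case: eqP => [->|ba].
  by rewrite big_mkcond; apply: eq_bigr => x _; case: eqP => // /eqP /supp.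
by apply: big1 => x /eqP xb; apply: supp; rewrite xb; apply/eqP.
Qed.

Lemma walk_dist0_cvg_class_half w :
  (fun k => l1 (fun y => walk_dist e 0 w k y - class_half (c w (+) odd k) y)) @ \oo --> 0.
Proof.
have [N [N_gt0 N_even walks]] := bipartite_walkn_uniform esym econn card_gt1 proper_c.
pose f (p : T * T) : R := if c p.1 == c p.2 then walk_dist e 0 p.1 N p.2 else 1.
have f_gt0 p : 0 < f p.
  rewrite /f; case: eqP => [same|_]; last exact: ltr01.
  by apply: walk_dist_gt0 (walks _ _ same); rewrite lexx ltr01.
have [eps eps01 minor] := exists_pos_lbound f_gt0.
have -> : (fun k => l1 (fun y => walk_dist e 0 w k y - class_half (c w (+) odd k) y)) =
          (fun k => l1 (iter k (step 0) (fun y => dirac w y - class_half (c w) y))).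
  by apply: boolp.funext => k; rewrite iter_stepB iter_step0_class_half walk_distE.
have g01 : 0 <= (0 : R) <= 1 by rewrite lexx ler01.
apply: (l1_iter_step_cvg0 (c := c) g01 N_gt0 eps01) => [x y same|x y other|b].
- by have := minor (x, y); rewrite /f /= same eqxx.
- by apply: walk_dist0_other_class; rewrite (negbTE N_even) addbF eq_sym.
have dirac_supp x : c x != c w -> dirac w x = 0 :> R.
  by rewrite /dirac; case: (eqVneq x w) => // ->; rewrite eqxx.
have half_supp x : c x != c w -> class_half (c w) x = 0.
  by rewrite /class_half /stationary_on => /negbTE ->; rewrite mulr0.
rewrite sumrB (class_sum_supported _ dirac_supp) (class_sum_supported _ half_supp).
by rewrite (dirac_distr w).2 (class_half_distr _).2 subrr.
Qed.

Lemma stationary_on_ge0 b x : 0 <= stationary_on b x.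
Proof. by rewrite /stationary_on; case: ifP => // _; exact: stationary_distr.1. Qed.

Lemma plan_cost_ge_moved (mu nu : T -> R) (P : T -> T -> R) b :
  (forall x, c x != b -> mu x = 0) -> transport_plan mu nu P ->
  \sum_(y | c y == ~~ b) nu y <= plan_cost e P.
Proof.
move=> mu_supp [P_ge0 [rows cols]]; under eq_bigr => y _ do rewrite -cols.
rewrite exchange_big /plan_cost /=; apply: ler_sum => x _.
rewrite big_mkcond /=; apply: ler_sum => y _.
case: ifP => [y_out|_]; last by rewrite mulr_ge0 ?ler0n.
have [x_in|x_out] := eqVneq (c x) b.
  have xy : x != y by apply: contraTneq y_out => <-; rewrite x_in; case: b {x_in mu_supp}.
  by rewrite ler_peMl ?ler1n ?gdist_gt0.
have row0 : \sum_z P x z = 0 by rewrite rows mu_supp.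
by rewrite (psumr_eq0P _ row0) ?mulr0 // => z _; exact: P_ge0.
Qed.

(* Edge flows only use edges, so they cost no more than their mass. *)
Lemma cost_edge_flow b : cost (fun x y => (gdist e x y)%:R) (edge_flow b) <= 1 / 2.
Proof.
rewrite -(sum_stationary_on b); apply: ler_sum => x _; rewrite -edge_flow_row.
apply: ler_sum => y _; rewrite /edge_flow; case: ifP => [/andP[_ xy]|_]; last by rewrite mulr0.
have dist_le1 : (gdist e x y)%:R <= 1 :> R.
  by rewrite lern1 gdist_le //; apply/existsP; exists y; rewrite xy eqxx.
by rewrite ler_piMl // invr_ge0 ltW ?vol_gt0.
Qed.

Lemma wass_class_half_opp b : wass e (class_half b) (class_half (~~ b)) = 1.
Proof.
apply/eqP; rewrite eq_le; apply/andP; split.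
  have plan : transport_plan (class_half b) (class_half (~~ b))
                             (fun x y => 2 * edge_flow b x y).
    split=> [x y|]; first by rewrite mulr_ge0 ?edge_flow_ge0.
    by split=> [x|y]; rewrite -mulr_sumr ?edge_flow_row ?edge_flow_col.
  apply: le_trans (wass_le_cost e plan) _; rewrite plan_costE.
  have -> : cost (fun x y => (gdist e x y)%:R) (fun x y => 2 * edge_flow b x y) =
            2 * cost (fun x y => (gdist e x y)%:R) (edge_flow b).
    rewrite /cost mulr_sumr; apply: eq_bigr => x _; rewrite mulr_sumr.
    by apply: eq_bigr => y _; rewrite mulrCA.
  by have := cost_edge_flow b; lra.
apply: wass_ge (class_half_distr b) (class_half_distr (~~ b)) _ => P plan.
apply: le_trans (plan_cost_ge_moved (b := b) _ plan); last first.
  by move=> x /negbTE x_out; rewrite /class_half /stationary_on x_out mulr0.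
rewrite (class_sum_supported (a := ~~ b)) ?eqxx ?(class_half_distr _).2 // => x.
by move=> /negbTE x_out; rewrite /class_half /stationary_on x_out mulr0.
Qed.

Lemma wass_class_half_stationary b : wass e (class_half b) stationary = 1 / 2.
Proof.
apply/eqP; rewrite eq_le; apply/andP; split.
  pose P x y := (if x == y then stationary_on b x else 0) + edge_flow b x y.
  have diag_sum x : \sum_y (if x == y then stationary_on b x else 0) = stationary_on b x.
    by rewrite -big_mkcond (big_pred1 x) // => y; rewrite eq_sym.
  have plan : transport_plan (class_half b) stationary P.
    split=> [x y|].
      by rewrite addr_ge0 ?edge_flow_ge0 //; case: ifP; rewrite ?stationary_on_ge0.
    split=> [x|y]; rewrite big_split /= ?diag_sum ?edge_flow_row ?edge_flow_col.
      by rewrite /class_half; ring.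
    by rewrite -big_mkcond /= (big_pred1 y) ?stationary_onNE // => x; rewrite eq_sym.
  apply: le_trans (wass_le_cost e plan) _; rewrite plan_costE.
  apply: le_trans (cost_edge_flow b); rewrite /cost; apply: ler_sum => x _.
  apply: ler_sum => y _; rewrite /P mulrDr.
  by case: eqP => [->|_]; rewrite ?gdist_xx ?mul0r ?mulr0 add0r.
apply: wass_ge (class_half_distr b) stationary_distr _ => P plan.
apply: le_trans (plan_cost_ge_moved (b := b) _ plan); last first.
  by move=> x /negbTE x_out; rewrite /class_half /stationary_on x_out mulr0.
by rewrite -(sum_stationary_on (~~ b)) [X in _ <= X]big_mkcond.
Qed.

Lemma wass_walks0_cvg u v :
  (fun k => wass e (walk_dist e 0 u k) (walk_dist e 0 v k)) @ \oo --> ((c u != c v)%:R : R).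
Proof.
have g01 : 0 <= (0 : R) <= 1 by rewrite lexx ler01.
apply: (wass_cvg_l1 (a := fun k => class_half (c u (+) odd k))
                    (b := fun k => class_half (c v (+) odd k))) => [k|k|k|k|||k].
- exact: walk_dist_distr.
- exact: walk_dist_distr.
- exact: class_half_distr.
- exact: class_half_distr.
- exact: walk_dist0_cvg_class_half.
- exact: walk_dist0_cvg_class_half.
have [->|cuv] := eqVneq (c u) (c v); first by rewrite wass_xx //; exact: class_half_distr.
have -> : c v (+) odd k = ~~ (c u (+) odd k).
  by move: cuv; case: (c u); case: (c v); case: (odd k).
exact: wass_class_half_opp.
Qed.

Lemma wass_walks0_lazy_cvg (beta : R) u v : 0 < beta < 1 ->
  (fun k => wass e (walk_dist e 0 u k) (walk_dist e beta v k)) @ \oo --> (1 / 2 : R).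
Proof.
move=> /andP[beta_gt0 beta_lt1].
have beta01 : 0 <= beta < 1 by rewrite ltW.
apply: (wass_cvg_l1 (a := fun k => class_half (c u (+) odd k))
                    (b := fun=> stationary)) => [k|k|k|k|||k].
- by apply: walk_dist_distr; rewrite lexx ler01.
- by apply: walk_dist_distr; rewrite !ltW.
- exact: class_half_distr.
- exact: stationary_distr.
- exact: walk_dist0_cvg_class_half.
- by apply: walk_dist_cvg_stationary; [| left].
exact: wass_class_half_stationary.
Qed.
End Bipartite.

Lemma wass_walks_cvg_stationary (alpha beta : R) u v :
  0 <= alpha < 1 -> 0 < alpha \/ ~ bipartite e ->
  0 <= beta < 1 -> 0 < beta \/ ~ bipartite e ->
  (fun k => wass e (walk_dist e alpha u k) (walk_dist e beta v k)) @ \oo --> 0.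
Proof.
move=> alpha01 alpha_ap beta01 beta_ap.
apply: (wass_cvg_l1 (a := fun=> stationary) (b := fun=> stationary)) => [k|k|k|k|||k].
- by apply: walk_dist_distr; case/andP: alpha01 => -> /ltW.
- by apply: walk_dist_distr; case/andP: beta01 => -> /ltW.
- exact: stationary_distr.
- exact: stationary_distr.
- exact: walk_dist_cvg_stationary.
- exact: walk_dist_cvg_stationary.
exact/wass_xx/stationary_distr.
Qed.

Lemma wass_walks_cvg_dirac (alpha : R) u v :
  0 <= alpha < 1 -> 0 < alpha \/ ~ bipartite e ->
  (fun k => wass e (walk_dist e alpha u k) (walk_dist e (1 : R) v k)) @ \oo -->
  wass e stationary (dirac v).
Proof.
move=> alpha01 alpha_ap.
apply: (wass_cvg_l1 (a := fun=> stationary) (b := fun k => walk_dist e 1 v k)) => [k|k|k|k|||k].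
- by apply: walk_dist_distr; case/andP: alpha01 => -> /ltW.
- by apply: walk_dist_distr; rewrite ler01 lexx.
- exact: stationary_distr.
- by apply: walk_dist_distr; rewrite ler01 lexx.
- exact: walk_dist_cvg_stationary.
- by rewrite (boolp.funext (fun k => l1_subrr (walk_dist e (1 : R) v k))); exact: cvg_cst.
by rewrite walk_dist1.
Qed.

Lemma wass_walks_is_cvg (alpha beta : R) u v :
  0 <= alpha -> alpha <= beta -> beta <= 1 -> ~ (bipartite e /\ alpha = 0 /\ beta = 1) ->
  cvg ((fun k => wass e (walk_dist e alpha u k) (walk_dist e beta v k)) @ \oo).
Proof.
move=> alpha_ge0 alpha_le_beta beta_le1 not_bip01.
have [alpha1|alpha_neq1] := eqVneq alpha 1.
  have -> : beta = 1 by apply/eqP; rewrite eq_le beta_le1 -alpha1.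
  by rewrite alpha1 (boolp.funext (wass_walk_dist1 u v)); apply: cvgP; exact: cvg_cst.
have alpha01 : 0 <= alpha < 1 by rewrite alpha_ge0 lt_neqAle alpha_neq1 (le_trans alpha_le_beta).
have [beta1|beta_neq1] := eqVneq beta 1.
  rewrite beta1; apply/cvgP/wass_walks_cvg_dirac => //.
  have [[c proper_c]|] := pselect (bipartite e); last by right.
  left; rewrite lt_neqAle eq_sym alpha_ge0 andbT; apply/eqP => alpha0.
  by apply: not_bip01; split; [exists c | split].
have beta01 : 0 <= beta < 1 by rewrite lt_neqAle beta_neq1 beta_le1 (le_trans alpha_ge0).
have [[c proper_c]|nbip] := pselect (bipartite e); last first.
  by apply/cvgP/wass_walks_cvg_stationary => //; right.
have [alpha0|alpha_gt0] := eqVneq alpha 0; last first.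
  have alpha_pos : 0 < alpha by rewrite lt_neqAle eq_sym alpha_gt0.
  by apply/cvgP/wass_walks_cvg_stationary => //; left => //; exact: lt_le_trans alpha_le_beta.
rewrite alpha0; have [->|beta_neq0] := eqVneq beta 0.
  by apply: cvgP; exact: (wass_walks0_cvg proper_c).
apply: cvgP; apply: (wass_walks0_lazy_cvg proper_c).
by case/andP: beta01 => beta_ge0 ->; rewrite andbT lt_neqAle eq_sym beta_neq0.
Qed.

End RandomWalk.

Theorem theorem3p9 (R : realType) (T : finType) (e : rel T) (u v : T)
    (alpha beta : R) :
  simple_graph e -> connected_graph e -> (1 < #|T|)%N ->
  0 <= alpha -> alpha <= beta -> beta <= 1 ->
  ~ (bipartite e /\ alpha = 0 /\ beta = 1) ->
  exists W : R,
    ((fun k : nat => wass e (walk_dist e alpha u k) (walk_dist e beta v k))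
       @ \oo --> W) /\
    ((0 < alpha /\ beta < 1) \/ (alpha = 1 /\ beta = 1 /\ u = v) \/
     (~ bipartite e /\ alpha = 0 /\ beta < 1) \/
     (alpha = 0 /\ beta = 0 /\ exists n, walkn e (2 * n) u v) -> W = 0) /\
    (alpha = 0 /\ beta = 0 /\ W <> 0 -> W = 1) /\
    (alpha = 0 /\ 0 < beta /\ beta < 1 /\ bipartite e -> W = 1 / 2).
Proof.
move=> [esym eirr] econn card_gt1 alpha_ge0 alpha_le_beta beta_le1 not_bip01.
have cvgW := wass_walks_is_cvg esym eirr econn card_gt1 (u := u) (v := v)
  alpha_ge0 alpha_le_beta beta_le1 not_bip01.
set Wk := fun k => _ in cvgW *.
exists (lim (Wk @ \oo)); split=> //.
have lim0 : 0 < alpha \/ ~ bipartite e -> 0 < beta \/ ~ bipartite e -> beta < 1 ->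
    lim (Wk @ \oo) = 0.
  move=> alpha_ap beta_ap beta_lt1; apply/cvg_lim => //.
  apply: (wass_walks_cvg_stationary esym eirr econn card_gt1) => //.
    by rewrite alpha_ge0 (le_lt_trans alpha_le_beta).
  by rewrite beta_lt1 (le_trans alpha_ge0).
have lim00 (c : T -> bool) : (forall x y, e x y -> c x != c y) ->
    alpha = 0 -> beta = 0 -> lim (Wk @ \oo) = (c u != c v)%:R.
  move=> proper_c alpha0 beta0; apply/cvg_lim => //; rewrite /Wk alpha0 beta0.
  exact: (wass_walks0_cvg esym eirr econn card_gt1 proper_c).
split; [|split].
- case=> [[alpha_gt0 beta_lt1]|[[alpha1 [beta1 uv]]|[[nbip [alpha0 beta_lt1]]|]]].
  + by apply: lim0 => //; left => //; exact: lt_le_trans alpha_le_beta.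
  + apply/cvg_lim => //; rewrite /Wk alpha1 beta1 uv.
    under eq_fun do rewrite wass_walk_dist1.
    by rewrite wass_xx; [exact: cvg_cst | exact: dirac_distr].
  + by apply: lim0 => //; right.
  case=> alpha0 [beta0 [n walk_uv]].
  have [[c proper_c]|nbip] := pselect (bipartite e); last first.
    by apply: lim0; rewrite ?beta0 ?ltr01 //; right.
  by rewrite (lim00 c) // (walkn_parity proper_c walk_uv) /GRing.mul /= oddM addbF eqxx.
- case=> alpha0 [beta0 W_neq0]; have [[c proper_c]|nbip] := pselect (bipartite e).
    by move: W_neq0; rewrite (lim00 c) //; case: (c u != c v).
  by exfalso; apply: W_neq0; apply: lim0; rewrite ?beta0 ?ltr01 //; right.
case=> alpha0 [beta_gt0 [beta_lt1 [c proper_c]]]; apply/cvg_lim => //; rewrite /Wk alpha0.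
by apply: (wass_walks0_lazy_cvg esym eirr econn card_gt1 proper_c); rewrite beta_gt0.
Qed.
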